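(* The class $\mathcal{S}^*_{nc}$ satisfies: (1) $\mathcal{S}^*_{nc}\subset\mathcal{S}^*$; (2) $\mathcal{S}^*_{nc}\not\subset\mathcal{S}^*(\alpha)$ for every $\alpha\in(0,1)$; (3) $\mathcal{S}^*_{nc}\subset\mu(\beta)$ whenever $\beta\ge 2\sec 1$.
   Context: $\mathbb{D}$ is the open unit disk. $\mathcal{A}$ is the class of analytic $f$ on $\mathbb{D}$ with $f(0)=0$, $f'(0)=1$. For analytic $f,g$ on $\mathbb{D}$, $f\prec g$ means $f=g\circ\omega$ for some analytic $\omega:\mathbb{D}\to\mathbb{D}$ with $\omega(0)=0$. $\mathcal{S}^*_{nc}=\{f\in\mathcal{A}: zf'(z)/f(z)\prec (1+z)/\cos z\}$. $\mathcal{S}^*=\{f\in\mathcal{A}:\operatorname{Re}(zf'(z)/f(z))>0,\ z\in\mathbb{D}\}$; for $0\le\alpha<1$, $\mathcal{S}^*(\alpha)=\{f\in\mathcal{A}:\operatorname{Re}(zf'(z)/f(z))>\alpha,\ z\in\mathbb{D}\}$; for $\beta>1$, $\mu(\beta)=\{f\in\mathcal{A}:\operatorname{Re}(zf'(z)/f(z))<\beta,\ z\in\mathbb{D}\}$. *)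

From Stdlib Require Import Reals ClassicalEpsilon.
From Coquelicot Require Import Coquelicot.
Open Scope C_scope.

Definition inD (z : C) : Prop := (Cmod z < 1)%R.

Definition Cderiv (f : C -> C) (z : C) : C :=
  epsilon (inhabits (RtoC 0))
    (fun d => @is_derive C_AbsRing C_NormedModule f z d).

Definition analytic_on_D (f : C -> C) : Prop :=
  forall z, inD z -> @ex_derive C_AbsRing C_NormedModule f z.

Definition classA (f : C -> C) : Prop :=
  analytic_on_D f /\ f (RtoC 0) = RtoC 0 /\
  @is_derive C_AbsRing C_NormedModule f (RtoC 0) (RtoC 1).

(* complex cosine: cos(x+iy) = cos x cosh y - i sin x sinh y *)
Definition Ccos (z : C) : C :=
  ((cos (Re z) * cosh (Im z))%R, (- (sin (Re z) * sinh (Im z)))%R).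

Definition subordinate_on_D (g h : C -> C) : Prop :=
  exists w : C -> C,
    analytic_on_D w /\ (forall z, inD z -> inD (w z)) /\ w (RtoC 0) = RtoC 0 /\
    (forall z, inD z -> g z = h (w z)).

(* z f'(z)/f(z), extended by its limit value 1 at z = 0 (f in A) *)
Definition zfpf (f : C -> C) (z : C) : C :=
  match excluded_middle_informative (z = RtoC 0) with
  | left _ => RtoC 1
  | right _ => z * Cderiv f z / f z
  end.

Definition phi_nc (z : C) : C := (RtoC 1 + z) / Ccos z.

(* f(z) ≠ 0 for z ∈ D \ {0}: implicit whenever z f'/f is required to be analytic *)
Definition nonvanishing (f : C -> C) : Prop :=
  forall z, inD z -> z <> RtoC 0 -> f z <> RtoC 0.

Definition S_nc (f : C -> C) : Prop :=
  classA f /\ nonvanishing f /\ subordinate_on_D (zfpf f) phi_nc.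

Definition S_star (f : C -> C) : Prop :=
  classA f /\ nonvanishing f /\ forall z, inD z -> (0 < Re (zfpf f z))%R.

Definition S_star_alpha (alpha : R) (f : C -> C) : Prop :=
  classA f /\ nonvanishing f /\ forall z, inD z -> (alpha < Re (zfpf f z))%R.

Definition mu_beta (beta : R) (f : C -> C) : Prop :=
  classA f /\ nonvanishing f /\ forall z, inD z -> (Re (zfpf f z) < beta)%R.

(* Since z f'/f = phi_nc o w with |w| < 1, assertions (1) and (3) are bounds on
   phi_nc(u) = (1 + u)/cos u over the unit disk.  For u = x + iy, Re phi_nc(u) has the sign
   of (1 + x) cos x cosh y - y sin x sinh y, which is positive because
   y sinh y <= y^2 cosh y < (1 - x^2) cosh y and sin x (1 - x) < cos x; and
   |phi_nc(u)| < 2 / cos 1 because |cos u| >= cos x cosh y >= cos 1.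

   For (2), F(z) = z exp (int_0^1 (phi_nc(tz) - 1)/t dt) satisfies z F'/F = phi_nc, so F lies
   in the class (with w = id), while z F'/F = (1 - r)/cos r at z = -r, which tends to 0 as
   r -> 1.  Differentiability of F is obtained without a theory of holomorphic functions:
   phi_nc and its derivative satisfy a first-order Taylor estimate with a uniform quadratic
   remainder on the closed disk, which is stable under the algebraic operations building
   phi_nc from exp, and which allows differentiation under the integral sign. *)

From Stdlib Require Import Reals Lra ClassicalEpsilon.
From Coquelicot Require Import Coquelicot.

Open Scope R_scope.

Lemma Rabs_le_mvt_0 (f f' : R -> R) (b K : R) :
  f 0 = 0 -> (forall c, is_derive f c (f' c)) ->
  (forall c, Rabs c <= Rabs b -> Rabs (f' c) <= K) ->
  Rabs (f b) <= K * Rabs b.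
Proof.
  intros H0 Hd Hb.
  destruct (MVT_abs f f' 0 b (fun c _ => proj1 (is_derive_Reals f c _) (Hd c))) as (c & E & Hc).
  rewrite H0, !Rminus_0_r in E. rewrite E.
  apply Rmult_le_compat_r; [apply Rabs_pos | apply Hb].
  revert Hc; unfold Rmin, Rmax, Rabs.
  destruct (Rle_dec 0 b); repeat destruct Rcase_abs; lra.
Qed.

Lemma Rabs_sin_le (b : R) : Rabs (sin b) <= Rabs b.
Proof.
  rewrite <- (Rmult_1_l (Rabs b)). apply Rabs_le_mvt_0 with cos.
  - apply sin_0.
  - intros c. auto_derive; auto; ring.
  - intros c _. apply Rabs_le, COS_bound.
Qed.

Lemma Rabs_cos_sub_1_le (b : R) : Rabs (cos b - 1) <= b ^ 2.
Proof.
  replace (b ^ 2) with (Rabs b * Rabs b) by (rewrite <- pow2_abs; ring).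
  apply (Rabs_le_mvt_0 (fun c => cos c - 1) (fun c => - sin c)).
  - rewrite cos_0; ring.
  - intros c. auto_derive; auto; ring.
  - intros c Hc. rewrite Rabs_Ropp. eapply Rle_trans; [apply Rabs_sin_le | exact Hc].
Qed.

Lemma Rabs_sin_sub_le (b : R) : Rabs (sin b - b) <= Rabs b ^ 3.
Proof.
  replace (Rabs b ^ 3) with (b ^ 2 * Rabs b) by (rewrite <- pow2_abs; ring).
  apply (Rabs_le_mvt_0 (fun c => sin c - c) (fun c => cos c - 1)).
  - rewrite sin_0; ring.
  - intros c. auto_derive; auto; ring.
  - intros c Hc. eapply Rle_trans; [apply Rabs_cos_sub_1_le |].
    rewrite <- (pow2_abs c), <- (pow2_abs b). apply pow_incr. split; [apply Rabs_pos | exact Hc].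
Qed.

Lemma exp_le_exp (x y : R) : x <= y -> exp x <= exp y.
Proof. intros [H|H]; [left; apply exp_increasing, H | rewrite H; lra]. Qed.

Lemma Rabs_exp_sub_1_le (a : R) : Rabs a <= 2 -> Rabs (exp a - 1) <= exp 2 * Rabs a.
Proof.
  intros Ha. apply (Rabs_le_mvt_0 (fun c => exp c - 1) exp).
  - rewrite exp_0; ring.
  - intros c. auto_derive; auto; ring.
  - intros c Hc. rewrite Rabs_pos_eq by (left; apply exp_pos).
    apply exp_le_exp. pose proof (Rle_abs c). lra.
Qed.

Lemma Rabs_exp_sub_1_sub_le (a : R) : Rabs a <= 2 -> Rabs (exp a - 1 - a) <= exp 2 * a ^ 2.
Proof.
  intros Ha. replace (exp 2 * a ^ 2) with (exp 2 * Rabs a * Rabs a)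
    by (rewrite <- pow2_abs; ring).
  apply (Rabs_le_mvt_0 (fun c => exp c - 1 - c) (fun c => exp c - 1)).
  - rewrite exp_0; ring.
  - intros c. auto_derive; auto; ring.
  - intros c Hc. eapply Rle_trans; [apply Rabs_exp_sub_1_le; lra |].
    apply Rmult_le_compat_l; [left; apply exp_pos | exact Hc].
Qed.

Lemma cosh_abs (y : R) : cosh y = cosh (Rabs y).
Proof.
  unfold Rabs; destruct Rcase_abs; [| reflexivity].
  unfold cosh. rewrite Ropp_involutive, Rplus_comm. reflexivity.
Qed.

Lemma cosh_le (b a : R) : Rabs b <= Rabs a -> cosh b <= cosh a.
Proof.
  intros Hba. rewrite (cosh_abs b), (cosh_abs a). unfold cosh. rewrite !exp_Ropp.
  assert (Hq : 1 <= exp (Rabs b)) by (rewrite <- exp_0; apply exp_le_exp, Rabs_pos).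
  assert (Hqp : exp (Rabs b) <= exp (Rabs a)) by (apply exp_le_exp; exact Hba).
  set (p := exp (Rabs a)) in *. set (q := exp (Rabs b)) in *.
  assert (Ep : p * / p = 1) by (field; lra). assert (Eq : q * / q = 1) by (field; lra).
  assert (Hp1 : / p <= 1) by (rewrite <- Rinv_1; apply Rinv_le_contravar; lra).
  assert (Hq1 : / q <= 1) by (rewrite <- Rinv_1; apply Rinv_le_contravar; lra).
  assert (0 < / q) by (apply Rinv_0_lt_compat; lra).
  assert (E : p + / p - (q + / q) = (p - q) * (1 - / p * / q)) by (field; lra).
  assert (0 <= (p - q) * (1 - / p * / q)) by (apply Rmult_le_pos; nra).
  lra.
Qed.

Lemma cosh_ge_1 (y : R) : 1 <= cosh y.
Proof. rewrite <- cosh_0. apply cosh_le. rewrite Rabs_R0. apply Rabs_pos. Qed.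

Lemma Rabs_sinh_le (y : R) : Rabs (sinh y) <= cosh y * Rabs y.
Proof.
  apply Rabs_le_mvt_0 with cosh.
  - apply sinh_0.
  - intros c. apply is_derive_Reals, derivable_pt_lim_sinh.
  - intros c Hc. rewrite Rabs_pos_eq by (pose proof (cosh_ge_1 c); lra).
    apply cosh_le, Hc.
Qed.

Lemma Rmult_sinh_ge_0 (y : R) : 0 <= y * sinh y.
Proof.
  destruct (Rle_dec 0 y) as [Hy|Hy].
  - apply Rmult_le_pos; [exact Hy |]. rewrite <- sinh_0.
    destruct Hy as [Hy|<-]; [left; apply sinh_lt, Hy | lra].
  - assert (sinh y < 0) by (rewrite <- sinh_0; apply sinh_lt; lra). nra.
Qed.

Lemma cos_1_ge_half : 1 / 2 <= cos 1.
Proof.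
  pose proof PI2_3_2.
  destruct (cos_bound 1 0) as [Hlow _]; [lra | lra |].
  eapply Rle_trans; [| exact Hlow]. unfold cos_approx, cos_term. simpl. lra.
Qed.

Lemma cos_1_le (x : R) : Rabs x <= 1 -> cos 1 <= cos x.
Proof.
  intros Hx. pose proof PI2_3_2.
  replace (cos x) with (cos (Rabs x))
    by (unfold Rabs; destruct Rcase_abs; [apply cos_neg | reflexivity]).
  apply cos_decr_1; try lra. apply Rabs_pos.
Qed.

Open Scope C_scope.

Lemma Cmod_le_Re_Im (z : C) : (Cmod z <= Rabs (Re z) + Rabs (Im z))%R.
Proof.
  pose proof (Cmod2_alt z). pose proof (Cmod_ge_0 z).
  pose proof (Rabs_pos (Re z)). pose proof (Rabs_pos (Im z)).
  rewrite <- (pow2_abs (Re z)), <- (pow2_abs (Im z)) in H. nra.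
Qed.

Lemma Im_le_Cmod (z : C) : (Rabs (Im z) <= Cmod z)%R.
Proof. eapply Rle_trans; [apply Rmax_r | apply Rmax_Cmod]. Qed.

Lemma Cmod_sub_sym (x y : C) : Cmod (x - y) = Cmod (y - x).
Proof. replace (x - y) with (- (y - x)) by ring. apply Cmod_opp. Qed.

Lemma Cmod_sub_le (x y : C) : (Cmod (x - y) <= Cmod x + Cmod y)%R.
Proof. eapply Rle_trans; [apply Cmod_triangle | rewrite Cmod_opp; lra]. Qed.

Definition Cexp (z : C) : C := (exp (Re z) * cos (Im z), exp (Re z) * sin (Im z))%R.

Lemma Cexp_add (u v : C) : Cexp (u + v) = Cexp u * Cexp v.
Proof.
  destruct u as [a b], v as [c d]. unfold Cexp, Cmult, Cplus. simpl.
  rewrite exp_plus, cos_plus, sin_plus. f_equal; ring.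
Qed.

Lemma Cexp_0 : Cexp 0 = 1.
Proof.
  unfold Cexp. simpl. rewrite exp_0, cos_0, sin_0.
  apply injective_projections; simpl; ring.
Qed.

Lemma Cmod_Cexp (u : C) : Cmod (Cexp u) = exp (Re u).
Proof.
  unfold Cmod, Cexp. simpl.
  replace (exp (Re u) * cos (Im u) * (exp (Re u) * cos (Im u) * 1) +
           exp (Re u) * sin (Im u) * (exp (Re u) * sin (Im u) * 1))%R
    with (exp (Re u) * exp (Re u) * (sin (Im u) ^ 2 + cos (Im u) ^ 2))%R by ring.
  rewrite <- !Rsqr_pow2, sin2_cos2, Rmult_1_r.
  apply sqrt_square. left; apply exp_pos.
Qed.

Lemma Cexp_neq_0 (u : C) : Cexp u <> 0.
Proof.
  intros E. pose proof (exp_pos (Re u)).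
  rewrite <- Cmod_Cexp, E, Cmod_0 in H. lra.
Qed.

Lemma Cmod_Cexp_sub_1_sub_le (d : C) : (Cmod d <= 2)%R ->
  (Cmod (Cexp d - 1 - d) <= 4 * exp 2 * Cmod d ^ 2)%R.
Proof.
  intros Hd. pose proof (re_le_Cmod d) as Ha. pose proof (Im_le_Cmod d) as Hb.
  pose proof (Cmod2_alt d) as Hr. pose proof (Cmod_ge_0 d).
  eapply Rle_trans; [apply Cmod_le_Re_Im |].
  destruct d as [a b]. cbn [Re Im fst snd] in Ha, Hb, Hr. set (r := Cmod (a, b)) in *.
  unfold Cexp, Cminus, Cplus, Copp, RtoC. cbn [Re Im fst snd].
  match goal with |- (Rabs ?X + Rabs ?Y <= _)%R =>
    replace X with (exp a * (cos b - 1) + (exp a - 1 - a))%R by ring;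
    replace Y with (exp a * (sin b - b) + (exp a - 1) * b)%R by ring end.
  assert (Ea : (0 < exp a <= exp 2)%R).
  { split; [apply exp_pos | apply exp_le_exp]. pose proof (Rle_abs a). lra. }
  assert (Ha2 : (Rabs a <= 2)%R) by lra.
  pose proof (Rabs_cos_sub_1_le b). pose proof (Rabs_sin_sub_le b).
  pose proof (Rabs_exp_sub_1_le a Ha2). pose proof (Rabs_exp_sub_1_sub_le a Ha2).
  pose proof (Rabs_pos a). pose proof (Rabs_pos b).
  pose proof (Rabs_pos (cos b - 1)). pose proof (Rabs_pos (sin b - b)).
  pose proof (Rabs_pos (exp a - 1)).
  assert (Hb3 : (Rabs b ^ 3 <= 2 * r ^ 2)%R) by (rewrite <- (pow2_abs b) in Hr; simpl; nra).
  assert (Hab : (Rabs a * Rabs b <= r ^ 2)%R)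
    by (rewrite <- (pow2_abs a), <- (pow2_abs b) in Hr; nra).
  assert (Hre : (Rabs (exp a * (cos b - 1) + (exp a - 1 - a)) <= exp 2 * r ^ 2)%R).
  { eapply Rle_trans; [apply Rabs_triang |].
    rewrite Rabs_mult, (Rabs_pos_eq (exp a)) by lra. nra. }
  assert (Him : (Rabs (exp a * (sin b - b) + (exp a - 1) * b) <= 3 * exp 2 * r ^ 2)%R).
  { eapply Rle_trans; [apply Rabs_triang |].
    rewrite !Rabs_mult, (Rabs_pos_eq (exp a)) by lra. nra. }
  lra.
Qed.

(** * Uniform Taylor estimates on the closed unit disk *)

Lemma Cmod_mult_le (a b : C) (A B : R) :
  (Cmod a <= A)%R -> (Cmod b <= B)%R -> (Cmod (a * b) <= A * B)%R.
Proof.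
  intros Ha Hb. rewrite Cmod_mult.
  apply Rmult_le_compat; auto using Cmod_ge_0.
Qed.

Definition in_cdisk (u : C) : Prop := (Cmod u <= 1)%R.

Lemma in_cdisk_0 : in_cdisk 0.
Proof. unfold in_cdisk. rewrite Cmod_0. lra. Qed.

Lemma in_cdisk_sub (u v : C) : in_cdisk u -> in_cdisk v -> (Cmod (v - u) <= 2)%R.
Proof. unfold in_cdisk. pose proof (Cmod_sub_le v u). lra. Qed.

Definition lipschitz_cdisk (F : C -> C) : Prop :=
  exists K, (0 <= K)%R /\ forall u v, in_cdisk u -> in_cdisk v ->
    (Cmod (F v - F u) <= K * Cmod (v - u))%R.

Lemma lipschitz_cdisk_bounded (F : C -> C) : lipschitz_cdisk F ->
  exists B, (0 <= B)%R /\ forall u, in_cdisk u -> (Cmod (F u) <= B)%R.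
Proof.
  intros (K & HK & HF). exists (Cmod (F 0) + K)%R. split.
  { pose proof (Cmod_ge_0 (F 0)). lra. }
  intros u Hu. replace (F u) with (F 0 + (F u - F 0)) by ring.
  eapply Rle_trans; [apply Cmod_triangle |]. apply Rplus_le_compat_l.
  eapply Rle_trans; [apply HF; auto using in_cdisk_0 |].
  rewrite <- (Rmult_1_r K) at 2. apply Rmult_le_compat_l; auto.
  replace (u - 0) with u by ring. exact Hu.
Qed.

Definition taylor_cdisk (F F' : C -> C) : Prop :=
  exists M, (0 <= M)%R /\ forall u v, in_cdisk u -> in_cdisk v ->
    (Cmod (F v - F u - (v - u) * F' u) <= M * Cmod (v - u) ^ 2)%R.

Section TaylorCdisk.

Variables F F' : C -> C.
Hypothesis HF : taylor_cdisk F F'.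

Lemma taylor_cdisk_deriv_lipschitz : lipschitz_cdisk F'.
Proof.
  destruct HF as (M & HM & HT). exists (2 * M)%R. split; [lra |]. intros u v Hu Hv.
  destruct (Ceq_dec v u) as [->|E].
  { replace (u - u) with (RtoC 0) by ring. replace (F' u - F' u) with (RtoC 0) by ring.
    rewrite Cmod_0. lra. }
  assert (Hd : (0 < Cmod (v - u))%R)
    by (apply Cmod_gt_0; intros H; apply E; replace v with (v - u + u) by ring; rewrite H; ring).
  apply Rmult_le_reg_l with (Cmod (v - u)); [exact Hd |].
  rewrite <- Cmod_mult.
  replace ((v - u) * (F' v - F' u)) with
    ((F v - F u - (v - u) * F' u) + (F u - F v - (u - v) * F' v)) by ring.
  eapply Rle_trans; [apply Cmod_triangle |].
  pose proof (HT u v Hu Hv). pose proof (HT v u Hv Hu). rewrite (Cmod_sub_sym u v) in *.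
  nra.
Qed.

Lemma taylor_cdisk_lipschitz : lipschitz_cdisk F.
Proof.
  destruct (lipschitz_cdisk_bounded _ taylor_cdisk_deriv_lipschitz) as (B & HB & HF').
  destruct HF as (M & HM & HT). exists (B + 2 * M)%R. split; [lra |]. intros u v Hu Hv.
  replace (F v - F u) with ((F v - F u - (v - u) * F' u) + (v - u) * F' u) by ring.
  eapply Rle_trans; [apply Cmod_triangle |]. rewrite Cmod_mult.
  pose proof (HT u v Hu Hv). pose proof (HF' u Hu).
  pose proof (in_cdisk_sub u v Hu Hv). pose proof (Cmod_ge_0 (v - u)).
  assert (M * Cmod (v - u) ^ 2 <= 2 * M * Cmod (v - u))%R.
  { replace (M * Cmod (v - u) ^ 2)%R with (M * Cmod (v - u) * Cmod (v - u))%R by ring.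
    replace (2 * M * Cmod (v - u))%R with (M * Cmod (v - u) * 2)%R by ring.
    apply Rmult_le_compat_l; [apply Rmult_le_pos |]; lra. }
  assert (Cmod (v - u) * Cmod (F' u) <= Cmod (v - u) * B)%R by (apply Rmult_le_compat_l; lra).
  lra.
Qed.

End TaylorCdisk.

Lemma taylor_cdisk_ext (F G F' : C -> C) :
  (forall u, F u = G u) -> taylor_cdisk F F' -> taylor_cdisk G F'.
Proof.
  intros E (M & HM & HT). exists M. split; [exact HM |].
  intros u v Hu Hv. rewrite <- !E. apply HT; auto.
Qed.

Lemma taylor_cdisk_affine (a b : C) : taylor_cdisk (fun u => a + b * u) (fun _ => b).
Proof.
  exists 0%R. split; [lra |]. intros u v _ _.
  replace (a + b * v - (a + b * u) - (v - u) * b) with (RtoC 0) by ring.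
  rewrite Cmod_0. lra.
Qed.

Lemma taylor_cdisk_plus (F F' G G' : C -> C) :
  taylor_cdisk F F' -> taylor_cdisk G G' ->
  taylor_cdisk (fun u => F u + G u) (fun u => F' u + G' u).
Proof.
  intros (M & HM & HF) (N & HN & HG). exists (M + N)%R. split; [lra |].
  intros u v Hu Hv.
  replace (F v + G v - (F u + G u) - (v - u) * (F' u + G' u)) with
    ((F v - F u - (v - u) * F' u) + (G v - G u - (v - u) * G' u)) by ring.
  eapply Rle_trans; [apply Cmod_triangle |].
  pose proof (HF u v Hu Hv). pose proof (HG u v Hu Hv). lra.
Qed.

Lemma taylor_cdisk_scal (k : C) (F F' : C -> C) :
  taylor_cdisk F F' -> taylor_cdisk (fun u => k * F u) (fun u => k * F' u).
Proof.
  intros (M & HM & HF). exists (Cmod k * M)%R. split.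
  { apply Rmult_le_pos; [apply Cmod_ge_0 | exact HM]. }
  intros u v Hu Hv.
  replace (k * F v - k * F u - (v - u) * (k * F' u)) with
    (k * (F v - F u - (v - u) * F' u)) by ring.
  rewrite Rmult_assoc. apply Cmod_mult_le; [lra | auto].
Qed.

Lemma taylor_cdisk_comp_scal (a : C) (F F' : C -> C) : (Cmod a <= 1)%R ->
  taylor_cdisk F F' -> taylor_cdisk (fun u => F (a * u)) (fun u => a * F' (a * u)).
Proof.
  intros Ha (M & HM & HF).
  assert (Hdisk : forall u, in_cdisk u -> in_cdisk (a * u)).
  { unfold in_cdisk; intros u Hu. rewrite Cmod_mult.
    rewrite <- (Rmult_1_l 1). apply Rmult_le_compat; auto using Cmod_ge_0. }
  exists M. split; [exact HM |]. intros u v Hu Hv.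
  replace (F (a * v) - F (a * u) - (v - u) * (a * F' (a * u))) with
    (F (a * v) - F (a * u) - (a * v - a * u) * F' (a * u)) by ring.
  eapply Rle_trans; [apply HF; auto |].
  replace (a * v - a * u) with (a * (v - u)) by ring. rewrite Cmod_mult.
  apply Rmult_le_compat_l; [exact HM |].
  rewrite Rpow_mult_distr. rewrite <- (Rmult_1_l (Cmod (v - u) ^ 2)) at 2.
  apply Rmult_le_compat_r; [apply pow2_ge_0 |].
  rewrite <- (pow1 2). apply pow_incr. split; [apply Cmod_ge_0 | exact Ha].
Qed.

Lemma taylor_cdisk_mult (F F' G G' : C -> C) :
  taylor_cdisk F F' -> taylor_cdisk G G' ->
  taylor_cdisk (fun u => F u * G u) (fun u => F' u * G u + F u * G' u).
Proof.
  intros HF HG.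
  destruct (lipschitz_cdisk_bounded _ (taylor_cdisk_lipschitz _ _ HF)) as (BF & HBF & BndF).
  destruct (lipschitz_cdisk_bounded _ (taylor_cdisk_deriv_lipschitz _ _ HF))
    as (BF' & HBF' & BndF').
  destruct (lipschitz_cdisk_bounded _ (taylor_cdisk_lipschitz _ _ HG)) as (BG & HBG & BndG).
  destruct (taylor_cdisk_lipschitz _ _ HG) as (KG & HKG & LipG).
  destruct HF as (M & HM & TF). destruct HG as (N & HN & TG).
  exists (M * BG + BF' * KG + BF * N)%R. split.
  { repeat apply Rplus_le_le_0_compat; apply Rmult_le_pos; auto. }
  intros u v Hu Hv.
  replace (F v * G v - F u * G u - (v - u) * (F' u * G u + F u * G' u)) with
    ((F v - F u - (v - u) * F' u) * G v + (v - u) * F' u * (G v - G u)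
      + F u * (G v - G u - (v - u) * G' u)) by ring.
  set (d := Cmod (v - u)).
  assert (H1 : (Cmod ((F v - F u - (v - u) * F' u) * G v) <= M * d ^ 2 * BG)%R)
    by (apply Cmod_mult_le; auto).
  assert (H2 : (Cmod ((v - u) * F' u * (G v - G u)) <= d * BF' * (KG * d))%R)
    by (apply Cmod_mult_le; [apply Cmod_mult_le; [apply Rle_refl |] |]; auto).
  assert (H3 : (Cmod (F u * (G v - G u - (v - u) * G' u)) <= BF * (N * d ^ 2))%R)
    by (apply Cmod_mult_le; auto).
  eapply Rle_trans; [apply Cmod_triangle |].
  eapply Rle_trans; [apply Rplus_le_compat_r, Cmod_triangle |].
  replace ((M * BG + BF' * KG + BF * N) * d ^ 2)%R with
    (M * d ^ 2 * BG + d * BF' * (KG * d) + BF * (N * d ^ 2))%R by ring.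
  lra.
Qed.

Lemma taylor_cdisk_inv (G G' : C -> C) (m : R) : (0 < m)%R ->
  (forall u, in_cdisk u -> m <= Cmod (G u))%R -> taylor_cdisk G G' ->
  taylor_cdisk (fun u => / G u) (fun u => - G' u / (G u * G u)).
Proof.
  intros Hm Hlow HG.
  destruct (lipschitz_cdisk_bounded _ (taylor_cdisk_lipschitz _ _ HG)) as (BG & HBG & BndG).
  destruct (lipschitz_cdisk_bounded _ (taylor_cdisk_deriv_lipschitz _ _ HG))
    as (BG' & HBG' & BndG').
  destruct (taylor_cdisk_lipschitz _ _ HG) as (KG & HKG & LipG).
  destruct HG as (N & HN & TG).
  assert (NZ : forall u, in_cdisk u -> G u <> 0).
  { intros u Hu E. pose proof (Hlow u Hu). rewrite E, Cmod_0 in H. lra. }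
  exists ((N * BG + BG' * KG) / (m * m * m))%R. split.
  { apply Rdiv_le_0_compat; [| repeat apply Rmult_lt_0_compat; auto].
    apply Rplus_le_le_0_compat; apply Rmult_le_pos; auto. }
  intros u v Hu Hv. pose proof (NZ u Hu). pose proof (NZ v Hv).
  replace (/ G v - / G u - (v - u) * (- G' u / (G u * G u))) with
    ((- (G v - G u - (v - u) * G' u) * G u + (v - u) * G' u * (G v - G u))
       / (G u * G u * G v)) by (field; auto).
  set (d := Cmod (v - u)).
  assert (Num : (Cmod (- (G v - G u - (v - u) * G' u) * G u + (v - u) * G' u * (G v - G u))
                 <= (N * BG + BG' * KG) * d ^ 2)%R).
  { eapply Rle_trans; [apply Cmod_triangle |].
    replace ((N * BG + BG' * KG) * d ^ 2)%R with
      (N * d ^ 2 * BG + d * BG' * (KG * d))%R by ring.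
    apply Rplus_le_compat.
    - apply Cmod_mult_le; [rewrite Cmod_opp |]; auto.
    - apply Cmod_mult_le; [apply Cmod_mult_le; [apply Rle_refl |] |]; auto. }
  rewrite Cmod_div by (repeat apply Cmult_neq_0; auto). rewrite !Cmod_mult.
  pose proof (Hlow u Hu). pose proof (Hlow v Hv).
  replace ((N * BG + BG' * KG) / (m * m * m) * d ^ 2)%R
    with ((N * BG + BG' * KG) * d ^ 2 * / (m * m * m))%R by (unfold Rdiv; ring).
  apply Rmult_le_compat; [apply Cmod_ge_0 | | exact Num |].
  { left. apply Rinv_0_lt_compat. repeat apply Rmult_lt_0_compat; lra. }
  apply Rinv_le_contravar; [repeat apply Rmult_lt_0_compat; lra |].
  assert (0 <= m * m)%R by nra.
  apply Rmult_le_compat; [lra | lra | apply Rmult_le_compat; lra | lra].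
Qed.

Lemma taylor_cdisk_Cexp : taylor_cdisk Cexp Cexp.
Proof.
  exists (exp 1 * (4 * exp 2))%R. split.
  { pose proof (exp_pos 1). pose proof (exp_pos 2). nra. }
  intros u v Hu Hv.
  assert (E : Cexp v = Cexp u * Cexp (v - u)) by (rewrite <- Cexp_add; f_equal; ring).
  replace (Cexp v - Cexp u - (v - u) * Cexp u) with (Cexp u * (Cexp (v - u) - 1 - (v - u)))
    by (rewrite E; ring).
  replace (exp 1 * (4 * exp 2) * Cmod (v - u) ^ 2)%R
    with (exp 1 * (4 * exp 2 * Cmod (v - u) ^ 2))%R by ring.
  apply Cmod_mult_le.
  - rewrite Cmod_Cexp. apply exp_le_exp.
    pose proof (re_le_Cmod u). pose proof (Rle_abs (Re u)). unfold in_cdisk in Hu. lra.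
  - apply Cmod_Cexp_sub_1_sub_le, in_cdisk_sub; auto.
Qed.

Lemma Ccos_Cexp (u : C) : Ccos u = / 2 * (Cexp (Ci * u) + Cexp (- Ci * u)).
Proof.
  destruct u as [x y]. unfold Ccos, Cexp, Ci, Cmult, Cplus, Copp, Cinv, RtoC. simpl.
  replace (0 * x - 1 * y)%R with (- y)%R by ring.
  replace (0 * y + 1 * x)%R with x by ring.
  replace (- 0 * x - - (1) * y)%R with y by ring.
  replace (- 0 * y + - (1) * x)%R with (- x)%R by ring.
  rewrite cos_neg, sin_neg. unfold cosh, sinh.
  apply injective_projections; simpl; field.
Qed.

Lemma taylor_cdisk_Ccos : exists Ccos', taylor_cdisk Ccos Ccos'.
Proof.
  assert (HCi : (Cmod (- Ci) <= 1)%R) by (rewrite Cmod_opp, Cmod_Ci; lra).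
  eexists. apply taylor_cdisk_ext with (fun u => / 2 * (Cexp (Ci * u) + Cexp (- Ci * u))).
  { intros u. symmetry. apply Ccos_Cexp. }
  apply taylor_cdisk_scal, taylor_cdisk_plus; apply taylor_cdisk_comp_scal;
    auto using taylor_cdisk_Cexp.
  rewrite Cmod_Ci; lra.
Qed.

Lemma cos_1_le_Cmod_Ccos (u : C) : in_cdisk u -> (cos 1 <= Cmod (Ccos u))%R.
Proof.
  intros Hu. pose proof (re_le_Cmod u). unfold in_cdisk in Hu.
  assert (Hx : (cos 1 <= cos (Re u))%R) by (apply cos_1_le; lra).
  eapply Rle_trans; [| apply re_le_Cmod]. unfold Ccos. simpl.
  pose proof (cosh_ge_1 (Im u)). pose proof cos_1_ge_half.
  rewrite Rabs_pos_eq by nra. nra.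
Qed.

Lemma taylor_cdisk_phi_nc : exists phi_nc', taylor_cdisk phi_nc phi_nc'.
Proof.
  destruct taylor_cdisk_Ccos as [Ccos' HCcos].
  pose proof cos_1_ge_half.
  eexists. apply taylor_cdisk_ext with (fun u => (1 + 1 * u) * / Ccos u).
  { intros u. unfold phi_nc, Cdiv. ring. }
  apply taylor_cdisk_mult; [apply taylor_cdisk_affine |].
  apply taylor_cdisk_inv with (cos 1); [lra | apply cos_1_le_Cmod_Ccos | exact HCcos].
Qed.

Lemma phi_nc_0 : phi_nc 0 = 1.
Proof.
  unfold phi_nc, Ccos. simpl. rewrite cos_0, sin_0, cosh_0, sinh_0.
  replace (1 * 1)%R with 1%R by ring. replace (- (0 * 0))%R with 0%R by ring.
  change (1%R, 0%R) with (RtoC 1). field.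
Qed.

Lemma Re_phi_nc (x y : R) : (0 < cos x)%R ->
  Re (phi_nc (x, y)) = (((1 + x) * (cos x * cosh y) - y * (sin x * sinh y)) /
                        ((cos x * cosh y) ^ 2 + (sin x * sinh y) ^ 2))%R.
Proof.
  intros Hc. pose proof (cosh_ge_1 y).
  assert (0 < cos x * cosh y)%R by nra.
  unfold phi_nc, Ccos, Cdiv, Cinv, Cmult, Cplus, RtoC. simpl. field. nra.
Qed.

Lemma Re_phi_nc_numerator_pos (x y : R) : (x ^ 2 + y ^ 2 < 1)%R ->
  (0 < (1 + x) * (cos x * cosh y) - y * (sin x * sinh y))%R.
Proof.
  intros Hxy. assert (Hx : (-1 < x < 1)%R) by nra. pose proof PI2_3_2.
  assert (Hc : (0 < cos x)%R) by (apply cos_gt_0; lra).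
  pose proof (cosh_ge_1 y). pose proof (Rmult_sinh_ge_0 y).
  destruct (Rle_dec x 0) as [Hx0|Hx0].
  - assert (sin x <= 0)%R.
    { rewrite <- (Ropp_involutive x), sin_neg. pose proof (sin_ge_0 (- x)). lra. }
    assert (0 < (1 + x) * (cos x * cosh y))%R by (apply Rmult_lt_0_compat; nra).
    nra.
  - assert (Hsin : (0 <= sin x <= x)%R)
      by (split; [apply sin_ge_0 | left; apply sin_lt_x]; lra).
    assert (Hysinh : (y * sinh y <= (1 - x ^ 2) * cosh y)%R).
    { pose proof (Rabs_sinh_le y). pose proof (Rle_abs (y * sinh y)).
      rewrite Rabs_mult in *. pose proof (Rabs_pos y). pose proof (Rabs_pos (sinh y)).
      rewrite <- (pow2_abs y) in Hxy. nra. }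
    assert (Hcos : (x * (1 - x) < cos x)%R).
    { pose proof (cos_1_le x ltac:(rewrite Rabs_pos_eq; lra)). pose proof cos_1_ge_half. nra. }
    assert (y * (sin x * sinh y) <= (1 + x) * (x * (1 - x)) * cosh y)%R.
    { replace (y * (sin x * sinh y))%R with (sin x * (y * sinh y))%R by ring.
      apply Rle_trans with (sin x * ((1 - x ^ 2) * cosh y))%R; [apply Rmult_le_compat_l; lra |].
      replace (sin x * ((1 - x ^ 2) * cosh y))%R with ((1 + x) * (1 - x) * cosh y * sin x)%R
        by ring.
      replace ((1 + x) * (x * (1 - x)) * cosh y)%R with ((1 + x) * (1 - x) * cosh y * x)%R
        by ring.
      apply Rmult_le_compat_l; [| lra]. apply Rmult_le_pos; [nra | lra]. }
    assert ((1 + x) * (x * (1 - x)) * cosh y < (1 + x) * (cos x * cosh y))%R.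
    { replace ((1 + x) * (cos x * cosh y))%R with ((1 + x) * cos x * cosh y)%R by ring.
      apply Rmult_lt_compat_r; [lra |]. apply Rmult_lt_compat_l; lra. }
    lra.
Qed.

Lemma Re_phi_nc_pos (u : C) : inD u -> (0 < Re (phi_nc u))%R.
Proof.
  unfold inD. intros Hu. pose proof (Cmod2_alt u) as Hs. pose proof (Cmod_ge_0 u).
  destruct u as [x y]. cbn [Re Im fst snd] in Hs.
  assert (Hxy : (x ^ 2 + y ^ 2 < 1)%R) by nra.
  assert (Hc : (0 < cos x)%R) by (pose proof PI2_3_2; apply cos_gt_0; nra).
  rewrite Re_phi_nc by exact Hc.
  pose proof (cosh_ge_1 y). assert (0 < cos x * cosh y)%R by nra.
  apply Rdiv_lt_0_compat; [apply Re_phi_nc_numerator_pos, Hxy | nra].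
Qed.

Lemma Cmod_phi_nc_lt (u : C) : inD u -> (Cmod (phi_nc u) < 2 / cos 1)%R.
Proof.
  unfold inD. intros Hu. pose proof cos_1_ge_half.
  assert (Hcos : (cos 1 <= Cmod (Ccos u))%R) by (apply cos_1_le_Cmod_Ccos; red; lra).
  assert (Ccos u <> 0) by (apply Cmod_gt_0; lra).
  assert (H1u : (Cmod (1 + u) < 2)%R)
    by (eapply Rle_lt_trans; [apply Cmod_triangle | rewrite Cmod_1; lra]).
  unfold phi_nc. rewrite Cmod_div by assumption. unfold Rdiv.
  apply Rle_lt_trans with (Cmod (1 + u) * / cos 1)%R.
  - apply Rmult_le_compat_l; [apply Cmod_ge_0 |]. apply Rinv_le_contravar; lra.
  - apply Rmult_lt_compat_r; [apply Rinv_0_lt_compat; lra | exact H1u].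
Qed.

Lemma phi_nc_RtoC (x : R) : (Rabs x <= 1)%R -> phi_nc (RtoC x) = RtoC ((1 + x) / cos x).
Proof.
  intros Hx. pose proof (cos_1_le x Hx). pose proof cos_1_ge_half.
  unfold phi_nc, Ccos, RtoC. simpl. rewrite cosh_0, sinh_0.
  unfold Cdiv, Cinv, Cmult, Cplus. simpl. apply injective_projections; simpl; field; nra.
Qed.

(** * Radial primitives *)

Lemma is_derive_of_quad {K : AbsRing} {V : NormedModule K} (f : K -> V) (x : K) (l : V)
  (del M : R) : (0 < del)%R ->
  (forall y, abs (minus y x) < del ->
     norm (minus (minus (f y) (f x)) (scal (minus y x) l)) <= M * abs (minus y x) ^ 2)%R ->
  is_derive f x l.
Proof.
  intros Hdel Hq. split; [apply is_linear_scal_l |].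
  intros x' Hx'.
  apply (@is_filter_lim_locally_unique K (AbsRing_NormedModule K)) in Hx'. subst x'.
  intros eps.
  assert (Hpos : (0 < Rmin del (eps / (Rabs M + 1)))%R).
  { apply Rmin_pos; [exact Hdel |]. apply Rdiv_lt_0_compat; [apply cond_pos |].
    pose proof (Rabs_pos M); lra. }
  exists (mkposreal _ Hpos). intros y Hy. simpl in Hy.
  change (abs (minus y x) < Rmin del (eps / (Rabs M + 1)))%R in Hy.
  pose proof (Rmin_l del (eps / (Rabs M + 1))). pose proof (Rmin_r del (eps / (Rabs M + 1))).
  set (a := abs (minus y x)) in *.
  assert (Ha : (0 <= a)%R) by apply abs_ge_0.
  assert (HMa : (Rabs M * a <= eps)%R).
  { apply Rle_trans with (Rabs M * (eps / (Rabs M + 1)))%R.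
    - apply Rmult_le_compat_l; [apply Rabs_pos | lra].
    - pose proof (Rabs_pos M).
      apply Rle_trans with ((Rabs M + 1) * (eps / (Rabs M + 1)))%R.
      + apply Rmult_le_compat_r; [| lra]. apply Rlt_le, Rdiv_lt_0_compat; [apply cond_pos | lra].
      + right. field. lra. }
  eapply Rle_trans; [apply Hq, (Rlt_le_trans _ _ _ Hy H) |].
  change (M * a ^ 2 <= eps * a)%R.
  pose proof (Rle_abs M). replace (M * a ^ 2)%R with (M * a * a)%R by ring. nra.
Qed.

Lemma is_derive_C_of_quad (f : C -> C) (z l : C) (del M : R) : (0 < del)%R ->
  (forall h, Cmod h < del -> Cmod (f (z + h)%C - f z - h * l) <= M * Cmod h ^ 2)%R ->
  is_derive f z l.
Proof.
  intros Hdel Hq. apply (is_derive_of_quad _ _ _ del M Hdel).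
  intros y Hy. change C in y. specialize (Hq (y - z) Hy).
  replace (z + (y - z)) with y in Hq by ring. exact Hq.
Qed.

Lemma norm_C_R (x : C) : @norm R_AbsRing C_R_NormedModule x = Cmod x.
Proof.
  destruct x as [a b]. unfold Cmod. simpl.
  change (sqrt (Rabs a ^ 2 + Rabs b ^ 2) = sqrt (a ^ 2 + b ^ 2))%R.
  rewrite !pow2_abs. reflexivity.
Qed.

Lemma scal_C_R (r : R) (x : C) : @scal R_AbsRing C_R_NormedModule r x = RtoC r * x.
Proof.
  destruct x as [a b]. apply injective_projections; simpl;
    change (scal r ?y) with (r * y)%R; ring.
Qed.

Lemma is_derive_R_of_quad (f : R -> C) (t : R) (l : C) (del M : R) : (0 < del)%R ->
  (forall h, Rabs h < del -> Cmod (f (t + h)%R - f t - RtoC h * l) <= M * h ^ 2)%R ->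
  @is_derive R_AbsRing C_R_NormedModule f t l.
Proof.
  intros Hdel Hq. apply (is_derive_of_quad _ _ _ del M Hdel).
  intros y Hy. change R in y. rewrite norm_C_R, scal_C_R.
  specialize (Hq (y - t)%R Hy). replace (t + (y - t))%R with y in Hq by ring.
  change (Cmod (f y - f t - RtoC (y - t) * l) <= M * Rabs (y - t) ^ 2)%R.
  rewrite pow2_abs. exact Hq.
Qed.

Lemma is_derive_Cexp (z : C) : is_derive Cexp z (Cexp z).
Proof.
  apply (is_derive_C_of_quad _ _ _ 2 (Cmod (Cexp z) * (4 * exp 2))); [lra |].
  intros h Hh.
  replace (Cexp (z + h) - Cexp z - h * Cexp z) with (Cexp z * (Cexp h - 1 - h))
    by (rewrite Cexp_add; ring).
  rewrite Rmult_assoc. apply Cmod_mult_le; [apply Rle_refl |].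
  apply Cmod_Cexp_sub_1_sub_le. lra.
Qed.

Lemma taylor_cdisk_is_derive_ray (F F' : C -> C) (z : C) (t : R) :
  taylor_cdisk F F' -> inD z -> (0 <= t <= 1)%R ->
  @is_derive R_AbsRing C_R_NormedModule (fun s : R => F (RtoC s * z)) t
    (z * F' (RtoC t * z)).
Proof.
  intros (M & HM & HT) Hz Ht. unfold inD in Hz. pose proof (Cmod_ge_0 z).
  assert (Htz : (Cmod (RtoC t * z) <= Cmod z)%R).
  { rewrite Cmod_mult, Cmod_R, Rabs_pos_eq by lra. nra. }
  apply (is_derive_R_of_quad _ _ _ (1 - Cmod z) M); [lra |].
  intros h Hh.
  assert (E : RtoC (t + h) * z - RtoC t * z = RtoC h * z)
    by (rewrite RtoC_plus; ring).
  replace (RtoC h * (z * F' (RtoC t * z))) with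
    ((RtoC (t + h) * z - RtoC t * z) * F' (RtoC t * z)) by (rewrite E; ring).
  eapply Rle_trans; [apply HT; unfold in_cdisk |].
  - lra.
  - replace (RtoC (t + h) * z) with (RtoC t * z + RtoC h * z) by (rewrite RtoC_plus; ring).
    eapply Rle_trans; [apply Cmod_triangle |]. rewrite (Cmod_mult (RtoC h)), Cmod_R.
    assert (Rabs h * Cmod z <= Rabs h)%R
      by (rewrite <- (Rmult_1_r (Rabs h)) at 2; apply Rmult_le_compat_l; [apply Rabs_pos | lra]).
    lra.
  - rewrite E, Cmod_mult, Cmod_R, Rpow_mult_distr, pow2_abs.
    apply Rmult_le_compat_l; [exact HM |].
    rewrite <- (Rmult_1_r (h ^ 2)) at 2. apply Rmult_le_compat_l; [apply pow2_ge_0 |].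
    rewrite <- (pow1 2). apply pow_incr. lra.
Qed.

Definition lipschitz_at (F : C -> C) (u : C) : Prop :=
  exists del K, (0 < del)%R /\ (0 <= K)%R /\
    forall v, (Cmod (v - u) < del)%R -> (Cmod (F v - F u) <= K * Cmod (v - u))%R.

Lemma lipschitz_at_scal (k : C) (F : C -> C) (u : C) :
  lipschitz_at F u -> lipschitz_at (fun v => k * F v) u.
Proof.
  intros (del & K & Hdel & HK & HF). exists del, (Cmod k * K)%R.
  split; [exact Hdel | split; [apply Rmult_le_pos; auto using Cmod_ge_0 |]].
  intros v Hv. replace (k * F v - k * F u) with (k * (F v - F u)) by ring.
  rewrite Rmult_assoc. apply Cmod_mult_le; [apply Rle_refl | auto].
Qed.

Lemma lipschitz_cdisk_at (F : C -> C) (u : C) :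
  lipschitz_cdisk F -> inD u -> lipschitz_at F u.
Proof.
  unfold inD. intros (K & HK & HF) Hu. exists (1 - Cmod u)%R, K.
  split; [lra | split; [exact HK |]]. intros v Hv. apply HF; unfold in_cdisk; [lra |].
  replace v with (u + (v - u)) by ring. eapply Rle_trans; [apply Cmod_triangle | lra].
Qed.

Lemma continuous_ray (F : C -> C) (z : C) (t : R) : lipschitz_at F (RtoC t * z) ->
  @continuous R_UniformSpace C_R_NormedModule (fun s : R => F (RtoC s * z)) t.
Proof.
  intros (del & K & Hdel & HK & HF). apply filterlim_locally. intros eps.
  set (r := (Cmod z + 1)%R). assert (Hr : (0 < r)%R) by (unfold r; pose proof (Cmod_ge_0 z); lra).
  assert (Hpos : (0 < Rmin (del / r) (eps / ((K + 1) * r)))%R).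
  { apply Rmin_pos; apply Rdiv_lt_0_compat; try apply cond_pos; nra. }
  exists (mkposreal _ Hpos). intros s Hs. simpl in Hs.
  change (Rabs (s - t) < Rmin (del / r) (eps / ((K + 1) * r)))%R in Hs.
  pose proof (Rmin_l (del / r) (eps / ((K + 1) * r))).
  pose proof (Rmin_r (del / r) (eps / ((K + 1) * r))).
  assert (Hd : (Cmod (RtoC s * z - RtoC t * z) <= Rabs (s - t) * r)%R).
  { replace (RtoC s * z - RtoC t * z) with (RtoC (s - t) * z) by (rewrite RtoC_minus; ring).
    rewrite Cmod_mult, Cmod_R. apply Rmult_le_compat_l; [apply Rabs_pos | unfold r; lra]. }
  assert (Hst : (Rabs (s - t) * r < del)%R).
  { apply Rlt_le_trans with (del / r * r)%R; [apply Rmult_lt_compat_r; lra |].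
    right. field. lra. }
  assert (Hst' : (Rabs (s - t) * r * (K + 1) < eps)%R).
  { apply Rlt_le_trans with (eps / ((K + 1) * r) * r * (K + 1))%R.
    - apply Rmult_lt_compat_r; [lra |]. apply Rmult_lt_compat_r; lra.
    - right. field. lra. }
  apply norm_compat1. rewrite norm_C_R.
  change (Cmod (F (RtoC s * z)%C - F (RtoC t * z)%C) < eps)%R.
  eapply Rle_lt_trans; [apply HF; lra |].
  pose proof (Rabs_pos (s - t)). pose proof (Cmod_ge_0 (RtoC s * z - RtoC t * z)). nra.
Qed.

Lemma is_RInt_Cmult (f : R -> C) (a b : R) (k l : C) :
  @is_RInt C_R_NormedModule f a b l ->
  @is_RInt C_R_NormedModule (fun t => k * f t) a b (k * l).
Proof.
  intros H.
  pose proof (@is_RInt_fct_extend_fst R_NormedModule R_NormedModule f a b l H) as H1.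
  pose proof (@is_RInt_fct_extend_snd R_NormedModule R_NormedModule f a b l H) as H2.
  destruct k as [k1 k2].
  apply (@is_RInt_fct_extend_pair R_NormedModule R_NormedModule).
  - exact (is_RInt_minus _ _ _ _ _ _ (is_RInt_scal _ _ _ k1 _ H1) (is_RInt_scal _ _ _ k2 _ H2)).
  - exact (is_RInt_plus _ _ _ _ _ _ (is_RInt_scal _ _ _ k1 _ H2) (is_RInt_scal _ _ _ k2 _ H1)).
Qed.

Lemma inD_ray (z : C) (t : R) : inD z -> (0 <= t <= 1)%R -> inD (RtoC t * z).
Proof.
  unfold inD. intros Hz Ht. pose proof (Cmod_ge_0 z).
  rewrite Cmod_mult, Cmod_R, Rabs_pos_eq by lra. nra.
Qed.

Lemma ex_RInt_ray (q : C -> C) (z : C) :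
  (forall t, (0 <= t <= 1)%R -> lipschitz_at q (RtoC t * z)) ->
  ex_RInt (V := C_R_CompleteNormedModule) (fun t => q (RtoC t * z)) 0 1.
Proof.
  intros Hq. apply ex_RInt_continuous. intros t Ht.
  rewrite Rmin_left, Rmax_right in Ht by lra.
  apply continuous_ray, Hq, Ht.
Qed.

Definition slope0 (p p' : C -> C) (u : C) : C :=
  match excluded_middle_informative (u = 0) with
  | left _ => p' 0
  | right _ => (p u - p 0) / u
  end.

Lemma slope0_0 (p p' : C -> C) : slope0 p p' 0 = p' 0.
Proof.
  unfold slope0. destruct excluded_middle_informative as [_|n]; [reflexivity | now elim n].
Qed.

Lemma slope0_neq_0 (p p' : C -> C) (u : C) : u <> 0 -> slope0 p p' u = (p u - p 0) / u.
Proof.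
  intros Hu. unfold slope0.
  destruct excluded_middle_informative; [contradiction | reflexivity].
Qed.

Lemma Cmult_slope0 (p p' : C -> C) (u : C) : u * slope0 p p' u = p u - p 0.
Proof.
  destruct (Ceq_dec u 0) as [->|Hu]; [ring |].
  rewrite slope0_neq_0 by exact Hu. field. exact Hu.
Qed.

Lemma slope0_lipschitz_at_0 (p p' : C -> C) :
  taylor_cdisk p p' -> lipschitz_at (slope0 p p') 0.
Proof.
  intros (M & HM & HT). exists 1%R, M. split; [lra | split; [exact HM |]].
  intros v Hv. replace (v - 0) with v in * by ring. rewrite slope0_0.
  destruct (Ceq_dec v 0) as [->|Hv0].
  { rewrite slope0_0. replace (p' 0 - p' 0) with (RtoC 0) by ring. rewrite Cmod_0. lra. }
  pose proof (HT 0 v in_cdisk_0 ltac:(unfold in_cdisk; lra)) as Hq.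
  replace (v - 0) with v in Hq by ring.
  rewrite slope0_neq_0 by exact Hv0.
  replace ((p v - p 0) / v - p' 0) with ((p v - p 0 - v * p' 0) / v) by (field; exact Hv0).
  rewrite Cmod_div by exact Hv0. apply Rle_div_l; [apply Cmod_gt_0, Hv0 |].
  replace (M * Cmod v * Cmod v)%R with (M * Cmod v ^ 2)%R by ring. exact Hq.
Qed.

Lemma slope0_lipschitz_at_neq_0 (p p' : C -> C) (u : C) :
  lipschitz_cdisk p -> inD u -> u <> 0 -> lipschitz_at (slope0 p p') u.
Proof.
  unfold inD. intros (Kp & HKp & Lip) Hu Hu0.
  set (a := Cmod u) in *. assert (Ha : (0 < a)%R) by (apply Cmod_gt_0, Hu0).
  set (c := Cmod (p u - p 0)). assert (Hc : (0 <= c)%R) by apply Cmod_ge_0.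
  exists (Rmin (a / 2) (1 - a)), ((a * Kp + c) / (a * (a / 2)))%R.
  split; [apply Rmin_pos; lra | split; [apply Rdiv_le_0_compat; nra |]].
  intros v Hv.
  pose proof (Rmin_l (a / 2) (1 - a)). pose proof (Rmin_r (a / 2) (1 - a)).
  assert (Hva : (a / 2 <= Cmod v)%R).
  { pose proof (Cmod_triangle v (u - v)) as Htri. replace (v + (u - v)) with u in Htri by ring.
    rewrite (Cmod_sub_sym u v) in Htri. fold a in Htri. lra. }
  assert (Hv0 : v <> 0) by (apply Cmod_gt_0; lra).
  assert (Hvd : in_cdisk v).
  { unfold in_cdisk. replace v with (u + (v - u)) by ring.
    eapply Rle_trans; [apply Cmod_triangle | fold a; lra]. }
  rewrite !slope0_neq_0 by assumption.
  replace ((p v - p 0) / v - (p u - p 0) / u) with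
    ((u * (p v - p u) - (v - u) * (p u - p 0)) / (u * v)) by (field; auto).
  assert (Num : (Cmod (u * (p v - p u) - (v - u) * (p u - p 0))
                 <= (a * Kp + c) * Cmod (v - u))%R).
  { eapply Rle_trans; [apply Cmod_sub_le |].
    replace ((a * Kp + c) * Cmod (v - u))%R
      with (a * (Kp * Cmod (v - u)) + Cmod (v - u) * c)%R by ring.
    apply Rplus_le_compat; apply Cmod_mult_le; try apply Rle_refl.
    apply Lip; [unfold in_cdisk; fold a; lra | exact Hvd]. }
  rewrite Cmod_div by (apply Cmult_neq_0; auto). rewrite Cmod_mult. fold a.
  apply Rle_div_l; [nra |].
  eapply Rle_trans; [exact Num |].
  replace ((a * Kp + c) / (a * (a / 2)) * Cmod (v - u) * (a * Cmod v))%R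
    with ((a * Kp + c) * Cmod (v - u) * (Cmod v / (a / 2)))%R by (field; lra).
  rewrite <- (Rmult_1_r ((a * Kp + c) * Cmod (v - u))) at 1.
  apply Rmult_le_compat_l; [pose proof (Cmod_ge_0 (v - u)); apply Rmult_le_pos; nra |].
  apply Rle_div_r; lra.
Qed.

Lemma slope0_lipschitz_at (p p' : C -> C) (u : C) :
  taylor_cdisk p p' -> inD u -> lipschitz_at (slope0 p p') u.
Proof.
  intros Hp Hu. destruct (Ceq_dec u 0) as [->|Hu0].
  - apply slope0_lipschitz_at_0, Hp.
  - apply slope0_lipschitz_at_neq_0; [| exact Hu | exact Hu0].
    apply (taylor_cdisk_lipschitz _ p'), Hp.
Qed.

Definition radial_primitive (q : C -> C) (z : C) : C :=
  RInt (V := C_R_CompleteNormedModule) (fun t => z * q (RtoC t * z)) 0 1.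

Definition radial_mean (q : C -> C) (z : C) : C :=
  RInt (V := C_R_CompleteNormedModule) (fun t => q (RtoC t * z)) 0 1.

Lemma radial_primitive_0 (q : C -> C) : radial_primitive q 0 = 0.
Proof.
  unfold radial_primitive. apply (is_RInt_unique (V := C_R_CompleteNormedModule)).
  apply (is_RInt_ext (V := C_R_NormedModule) (fun _ => RtoC 0)).
  { intros t _. symmetry. apply Cmult_0_l. }
  pose proof (is_RInt_const (V := C_R_NormedModule) 0 1 (RtoC 0)) as H.
  rewrite scal_C_R, Cmult_0_r in H. exact H.
Qed.

Lemma Cmult_slope0_ray (p p' : C -> C) (w : C) (t : R) : t <> 0%R ->
  w * slope0 p p' (RtoC t * w) = (p (RtoC t * w) - p 0) / RtoC t.
Proof.
  intros Ht. assert (Ht' : RtoC t <> 0) by (intros E; apply Ht; injection E; auto).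
  rewrite <- (Cmult_slope0 p p'). field. exact Ht'.
Qed.

Lemma slope0_ray_remainder (p p' : C -> C) (M : R) : (0 <= M)%R ->
  (forall u v, in_cdisk u -> in_cdisk v ->
     Rle (Cmod (p v - p u - (v - u) * p' u)) (M * Cmod (v - u) ^ 2)) ->
  forall (z h : C) (t : R), in_cdisk z -> in_cdisk (z + h) -> (0 <= t <= 1)%R ->
  Rle (Cmod ((z + h) * slope0 p p' (RtoC t * (z + h)) - z * slope0 p p' (RtoC t * z)
             - h * p' (RtoC t * z)))
      (M * Cmod h ^ 2).
Proof.
  intros HM HT z h t Hz Hzh Ht.
  assert (Hh2 : (0 <= Cmod h ^ 2)%R) by apply pow2_ge_0.
  destruct (Req_dec t 0) as [->|Ht0].
  { rewrite !Cmult_0_l, slope0_0.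
    replace ((z + h) * p' 0 - z * p' 0 - h * p' 0) with (RtoC 0) by ring.
    rewrite Cmod_0. apply Rmult_le_pos; assumption. }
  assert (Ht' : RtoC t <> 0) by (intros E; apply Ht0; injection E; auto).
  assert (Hray : forall w, in_cdisk w -> in_cdisk (RtoC t * w)).
  { unfold in_cdisk. intros w Hw. rewrite Cmod_mult, Cmod_R, Rabs_pos_eq by lra.
    pose proof (Cmod_ge_0 w). nra. }
  rewrite !Cmult_slope0_ray by exact Ht0.
  set (u := RtoC t * z). set (v := RtoC t * (z + h)).
  replace ((p v - p 0) / RtoC t - (p u - p 0) / RtoC t - h * p' u)
    with ((p v - p u - (v - u) * p' u) / RtoC t) by (unfold u, v; field; exact Ht').
  rewrite Cmod_div, Cmod_R, Rabs_pos_eq by (exact Ht' || lra).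
  apply Rle_div_l; [lra |].
  eapply Rle_trans; [apply HT; apply Hray; assumption |].
  replace (v - u) with (RtoC t * h) by (unfold u, v; ring).
  rewrite Cmod_mult, Cmod_R, Rabs_pos_eq by lra.
  replace (M * (t * Cmod h) ^ 2)%R with (M * Cmod h ^ 2 * t * t)%R by ring.
  assert (0 <= M * Cmod h ^ 2 * t)%R by (apply Rmult_le_pos; [apply Rmult_le_pos |]; lra).
  nra.
Qed.

Section RadialPrimitive.

Variables p p' : C -> C.
Hypothesis Hp : taylor_cdisk p p'.

Lemma deriv_lipschitz_at_ray (z : C) (t : R) :
  inD z -> (0 <= t <= 1)%R -> lipschitz_at p' (RtoC t * z).
Proof.
  intros Hz Ht. apply lipschitz_cdisk_at, inD_ray; auto.
  apply (taylor_cdisk_deriv_lipschitz p), Hp.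
Qed.

Lemma radial_primitive_deriv (z : C) : inD z -> radial_primitive p' z = p z - p 0.
Proof.
  intros Hz.
  assert (H : @is_RInt C_R_NormedModule (fun t => z * p' (RtoC t * z)) 0 1
                (minus (p (RtoC 1 * z)) (p (RtoC 0 * z)))).
  { apply (is_RInt_derive (V := C_R_CompleteNormedModule) (fun t => p (RtoC t * z)));
      intros t Ht; rewrite Rmin_left, Rmax_right in Ht by lra.
    - apply taylor_cdisk_is_derive_ray; auto.
    - apply (continuous_ray (fun v => z * p' v)), lipschitz_at_scal, deriv_lipschitz_at_ray;
        auto. }
  unfold radial_primitive. rewrite (is_RInt_unique (V := C_R_CompleteNormedModule) _ _ _ _ H).
  change (p (RtoC 1 * z) - p (RtoC 0 * z) = p z - p 0).
  rewrite Cmult_1_l, Cmult_0_l. reflexivity.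
Qed.

Lemma radial_mean_deriv (z : C) : inD z -> radial_mean p' z = slope0 p p' z.
Proof.
  intros Hz. destruct (Ceq_dec z 0) as [->|Hz0].
  - rewrite slope0_0. unfold radial_mean.
    apply (is_RInt_unique (V := C_R_CompleteNormedModule)).
    apply (is_RInt_ext (V := C_R_NormedModule) (fun _ => p' 0)).
    { intros t _. rewrite Cmult_0_r. reflexivity. }
    pose proof (is_RInt_const (V := C_R_NormedModule) 0 1 (p' 0)) as H.
    rewrite scal_C_R, Rminus_0_r, Cmult_1_l in H. exact H.
  - assert (E : radial_primitive p' z = z * radial_mean p' z).
    { unfold radial_primitive, radial_mean.
      apply (is_RInt_unique (V := C_R_CompleteNormedModule)).
      apply is_RInt_Cmult, (RInt_correct (V := C_R_CompleteNormedModule)).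
      apply ex_RInt_ray. intros t Ht. apply deriv_lipschitz_at_ray; auto. }
    rewrite slope0_neq_0, <- radial_primitive_deriv, E by exact Hz0 || exact Hz.
    field. exact Hz0.
Qed.

Lemma ex_RInt_slope0_ray (z : C) : inD z ->
  ex_RInt (V := C_R_CompleteNormedModule) (fun t => z * slope0 p p' (RtoC t * z)) 0 1.
Proof.
  intros Hz. apply (ex_RInt_ray (fun v => z * slope0 p p' v)).
  intros t Ht. apply lipschitz_at_scal, slope0_lipschitz_at, inD_ray; auto.
Qed.

Lemma is_derive_radial_primitive_slope0 (z : C) : inD z ->
  is_derive (radial_primitive (slope0 p p')) z (slope0 p p' z).
Proof.
  intros Hz. rewrite <- radial_mean_deriv by exact Hz.
  destruct Hp as (M & HM & HT). unfold inD in Hz.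
  apply (is_derive_C_of_quad _ _ _ (1 - Cmod z) M); [lra |]. intros h Hh.
  assert (Hzh : inD (z + h)) by (unfold inD; eapply Rle_lt_trans; [apply Cmod_triangle | lra]).
  pose proof (RInt_correct (V := C_R_CompleteNormedModule) _ _ _
                (ex_RInt_slope0_ray (z + h) Hzh)) as I1.
  pose proof (RInt_correct (V := C_R_CompleteNormedModule) _ _ _
                (ex_RInt_slope0_ray z Hz)) as I2.
  pose proof (is_RInt_Cmult _ _ _ h _ (RInt_correct (V := C_R_CompleteNormedModule) _ _ _
                (ex_RInt_ray _ z (fun t Ht => deriv_lipschitz_at_ray z t Hz Ht)))) as I3.
  pose proof (is_RInt_minus _ _ _ _ _ _ (is_RInt_minus _ _ _ _ _ _ I1 I2) I3) as I.
  pose proof (is_RInt_const (V := R_NormedModule) 0 1 (M * Cmod h ^ 2)%R) as Ibound.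
  match type of I with @is_RInt _ ?f _ _ _ =>
    assert (Hpt : forall t, (0 <= t <= 1)%R -> Rle (norm (f t)) (M * Cmod h ^ 2)) end.
  { intros t Ht. rewrite norm_C_R. cbv beta.
    unfold inD in Hzh.
    apply (slope0_ray_remainder p p' M HM HT); unfold in_cdisk; lra. }
  pose proof (norm_RInt_le _ _ 0 1 _ _ ltac:(lra) Hpt I Ibound) as Hle.
  rewrite norm_C_R in Hle. eapply Rle_trans; [exact Hle |].
  change (scal (1 - 0) (M * Cmod h ^ 2))%R with ((1 - 0) * (M * Cmod h ^ 2))%R. lra.
Qed.

End RadialPrimitive.

(* Coquelicot's product and chain rules are stated for [AbsRing_NormedModule C_AbsRing],
   a second normed-module structure on C with the same norm as [C_NormedModule]. *)
Lemma is_derive_C_iff (f : C -> C) (z l : C) :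
  @is_derive C_AbsRing C_NormedModule f z l <->
  @is_derive C_AbsRing (AbsRing_NormedModule C_AbsRing) f z l.
Proof. split; intros [_ H]; (split; [apply is_linear_scal_l | exact H]). Qed.

Lemma Cderiv_is_derive (f : C -> C) (z l : C) : is_derive f z l -> Cderiv f z = l.
Proof.
  intros H. unfold Cderiv.
  pose proof (epsilon_spec (inhabits (RtoC 0))
                (fun d => @is_derive C_AbsRing C_NormedModule f z d) (ex_intro _ l H)) as Heps.
  apply is_C_derive_unique in H, Heps. congruence.
Qed.

Definition zexp_primitive (p p' : C -> C) (z : C) : C :=
  z * Cexp (radial_primitive (slope0 p p') z).

Section ZexpPrimitive.

Variables p p' : C -> C.
Hypothesis Hp : taylor_cdisk p p'.
Hypothesis Hp0 : p 0 = 1.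

Let G := radial_primitive (slope0 p p').

Lemma is_derive_zexp_primitive (z : C) : inD z ->
  is_derive (zexp_primitive p p') z (Cexp (G z) * p z).
Proof.
  intros Hz.
  pose proof (proj1 (is_derive_C_iff _ _ _) (is_derive_radial_primitive_slope0 p p' Hp z Hz))
    as HG.
  pose proof (is_derive_comp Cexp G z _ _ (is_derive_Cexp (G z)) HG) as HE.
  apply is_derive_C_iff in HE.
  pose proof (is_derive_mult (fun x => x) (fun x => Cexp (G x)) z _ _
                (is_derive_id z) HE Cmult_comm) as HM.
  apply is_derive_C_iff in HM.
  replace (Cexp (G z) * p z) with
    (plus (mult one (Cexp (G z))) (mult z (scal (slope0 p p' z) (Cexp (G z))))).
  - exact HM.
  - change (1 * Cexp (G z) + z * (slope0 p p' z * Cexp (G z)) = Cexp (G z) * p z).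
    rewrite Cmult_assoc, Cmult_slope0, Hp0. ring.
Qed.

Lemma zfpf_zexp_primitive (z : C) : inD z -> zfpf (zexp_primitive p p') z = p z.
Proof.
  intros Hz. unfold zfpf. destruct excluded_middle_informative as [->|Hz0].
  - symmetry. exact Hp0.
  - rewrite (Cderiv_is_derive _ _ _ (is_derive_zexp_primitive z Hz)). unfold zexp_primitive, G.
    field. split; [apply Cexp_neq_0 | exact Hz0].
Qed.

Lemma classA_zexp_primitive : classA (zexp_primitive p p').
Proof.
  assert (HD0 : inD 0) by (unfold inD; rewrite Cmod_0; lra).
  split; [| split].
  - intros z Hz. eexists. apply is_derive_zexp_primitive, Hz.
  - unfold zexp_primitive. apply Cmult_0_l.
  - pose proof (is_derive_zexp_primitive 0 HD0) as H.
    unfold G in H. rewrite radial_primitive_0, Cexp_0, Hp0, Cmult_1_l in H. exact H.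
Qed.

Lemma nonvanishing_zexp_primitive : nonvanishing (zexp_primitive p p').
Proof.
  intros z _ Hz0. unfold zexp_primitive. apply Cmult_neq_0; [exact Hz0 | apply Cexp_neq_0].
Qed.

End ZexpPrimitive.

Lemma exists_classA_zfpf_eq (p p' : C -> C) : taylor_cdisk p p' -> p 0 = 1 ->
  exists f, classA f /\ nonvanishing f /\ forall z, inD z -> zfpf f z = p z.
Proof.
  intros Hp Hp0. exists (zexp_primitive p p').
  split; [apply classA_zexp_primitive; assumption |].
  split; [apply nonvanishing_zexp_primitive | apply zfpf_zexp_primitive; assumption].
Qed.

Lemma S_nc_zfpf (f : C -> C) : S_nc f ->
  forall z, inD z -> exists u, inD u /\ zfpf f z = phi_nc u.
Proof.
  intros (_ & _ & w & _ & Hw & _ & Hfw) z Hz. exists (w z). split; auto.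
Qed.

Lemma S_nc_of_zfpf_eq (f : C -> C) : classA f -> nonvanishing f ->
  (forall z, inD z -> zfpf f z = phi_nc z) -> S_nc f.
Proof.
  intros HA HN Hf. split; [exact HA | split; [exact HN |]].
  exists (fun z => z). split; [| split; [| split]]; auto.
  intros z _. exists (RtoC 1). apply is_derive_C_iff. exact (@is_derive_id C_AbsRing z).
Qed.

Lemma S_nc_subset_S_star (f : C -> C) : S_nc f -> S_star f.
Proof.
  intros Hf. split; [apply Hf | split; [apply Hf |]].
  intros z Hz. destruct (S_nc_zfpf f Hf z Hz) as (u & Hu & ->). apply Re_phi_nc_pos, Hu.
Qed.

Lemma S_nc_subset_mu_beta (beta : R) : (2 / cos 1 <= beta)%R ->
  forall f : C -> C, S_nc f -> mu_beta beta f.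
Proof.
  intros Hbeta f Hf. split; [apply Hf | split; [apply Hf |]].
  intros z Hz. destruct (S_nc_zfpf f Hf z Hz) as (u & Hu & ->).
  pose proof (Cmod_phi_nc_lt u Hu). pose proof (re_le_Cmod (phi_nc u)).
  pose proof (Rle_abs (Re (phi_nc u))). lra.
Qed.

Lemma exists_Re_phi_nc_lt (alpha : R) : (0 < alpha < 1)%R ->
  exists u, inD u /\ (Re (phi_nc u) < alpha)%R.
Proof.
  intros Halpha. set (r := (1 - alpha / 4)%R).
  assert (Hr : (Rabs (- r) < 1)%R) by (rewrite Rabs_Ropp, Rabs_pos_eq; unfold r; lra).
  exists (RtoC (- r)). split; [unfold inD; rewrite Cmod_R; exact Hr |].
  rewrite phi_nc_RtoC, re_RtoC, cos_neg by lra.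
  (* (1 - r) / cos r <= 2 (1 - r) = alpha / 2 *)
  assert (Hcos : (1 / 2 <= cos r)%R).
  { pose proof cos_1_ge_half. pose proof (cos_1_le r ltac:(rewrite <- Rabs_Ropp; lra)). lra. }
  apply Rle_lt_trans with (alpha / 2)%R; [| lra].
  apply Rle_div_l; [lra |]. replace (1 + - r)%R with (alpha / 4)%R by (unfold r; ring). nra.
Qed.

Lemma S_nc_not_subset_S_star_alpha (alpha : R) : (0 < alpha < 1)%R ->
  exists f : C -> C, S_nc f /\ ~ S_star_alpha alpha f.
Proof.
  intros Halpha. destruct taylor_cdisk_phi_nc as [phi_nc' Hphi].
  destruct (exists_classA_zfpf_eq _ _ Hphi phi_nc_0) as (f & HA & HN & Hf).
  exists f. split; [apply S_nc_of_zfpf_eq; assumption |].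
  intros (_ & _ & Hre). destruct (exists_Re_phi_nc_lt alpha Halpha) as (u & Hu & Hlt).
  specialize (Hre u Hu). rewrite Hf in Hre by exact Hu. lra.
Qed.

Theorem mainTheorem8 :
  (forall f : C -> C, S_nc f -> S_star f) /\
  (forall alpha : R, (0 < alpha < 1)%R ->
     exists f : C -> C, S_nc f /\ ~ S_star_alpha alpha f) /\
  (forall beta : R, (2 / cos 1 <= beta)%R ->
     forall f : C -> C, S_nc f -> mu_beta beta f).
Proof.
  split; [exact S_nc_subset_S_star |].
  split; [exact S_nc_not_subset_S_star_alpha | exact S_nc_subset_mu_beta].
Qed.
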